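(* Let $d\ge 2$, $D=\{1,\dots,d\}$, and let $\xi=(\xi_1,\dots,\xi_d)$ be a random vector with centered coordinates. Let $\phi\in\Phi$ be a Young–Orlicz function such that $\beta_i:=\|\xi_i\|_{B(\phi)}\in(0,\infty)$ for every $i\in D$. Suppose moreover that for every $i\in D$ there exists $\delta_i\in(0,\beta_i]$ with $$\mathbf P(\xi_i>u)\ge\exp\big(-\nu[\phi](u/\delta_i)\big)\quad\text{for all }u\ge 1.$$ Then for all $u\ge1$, $$\mathbf P\Big(\max_{i\in D}\xi_i>u\Big)\ \ge\ \sum_{i\in D}\exp\big(-\nu[\phi](u/\delta_i)\big)\ -\sum_{\substack{i,j\in D\\ i\neq j}}\exp\Big(-\nu[\phi]\Big(\frac{2u}{\beta_i+\beta_j}\Big)\Big),$$ where the double sum runs over ordered pairs $(i,j)$ with $i\ne j$.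
   Context: A Young–Orlicz function is a function $\phi:(-\lambda_0,\lambda_0)\to[0,\infty)$, for some $\lambda_0\in(0,\infty]$, which is even, strictly convex, twice continuously differentiable, positive for positive arguments, with $\phi(0)=0$, $\phi'(0)=0$, $\phi''(0)\in(0,\infty)$; $\Phi$ denotes the set of all such functions. For a centered random variable $\eta$, its $B(\phi)$-norm is $$\|\eta\|_{B(\phi)}:=\inf\{\tau\ge 0:\ \mathbf E\exp(\pm\lambda\eta)\le\exp(\phi(\lambda\tau))\ \text{for all real }\lambda\text{ with }|\lambda\tau|<\lambda_0\},$$ and $B(\phi)$ is the space of centered random variables with finite such norm. The Young–Fenchel (Legendre) transform of $\phi$ is $\nu[\phi](x):=\sup_{|\lambda|<\lambda_0}(\lambda x-\phi(\lambda))$. *)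

From HB Require Import structures.
From mathcomp Require Import all_boot all_order all_algebra.
From mathcomp Require Import all_classical all_reals all_analysis.
Set Implicit Arguments. Unset Strict Implicit. Unset Printing Implicit Defensive.
Import Order.TTheory GRing.Theory Num.Theory.
Import numFieldNormedType.Exports.
Local Open Scope classical_set_scope.
Local Open Scope ring_scope.

Definition YOdom {R : realType} (lam0 : \bar R) : set R :=
  [set x | (`|x|%:E < lam0)%E].

(* phi : (-lam0,lam0) -> [0,oo) is a Young-Orlicz function (phi is given as a
   total function R -> R; only its values on the domain matter). *)
Definition YoungOrlicz {R : realType} (lam0 : \bar R) (phi : R -> R) : Prop :=
  [/\ (0 < lam0)%E,
      (forall x, YOdom lam0 x -> 0 <= phi x),
      (forall x, YOdom lam0 x -> phi (- x) = phi x),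
      (forall x y t, YOdom lam0 x -> YOdom lam0 y -> x != y -> 0 < t < 1 ->
          phi (t * x + (1 - t) * y) < t * phi x + (1 - t) * phi y) &
      (forall x, YOdom lam0 x -> derivable phi x 1 /\ derivable (derive1 phi) x 1)] /\
  [/\ (forall x, YOdom lam0 x -> {for x, continuous (derive1 (derive1 phi))}),
      (forall x, YOdom lam0 x -> 0 < x -> 0 < phi x),
      phi 0 = 0, (derive1 phi) 0 = 0 & 0 < (derive1 (derive1 phi)) 0].

Definition Bphi_set {R : realType} {dm : measure_display} {T : measurableType dm}
  (P : probability T R) (lam0 : \bar R) (phi : R -> R) (X : T -> R) : set R :=
  [set tau | 0 <= tau /\
     forall l : R, (`|l * tau|%:E < lam0)%E ->
       (\int[P]_x (expR (l * X x))%:E <= (expR (phi (l * tau)))%:E)%E /\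
       (\int[P]_x (expR (- (l * X x)))%:E <= (expR (phi (l * tau)))%:E)%E].

(* ||X||_{B(phi)} as an extended real (= +oo when no admissible tau). *)
Definition Bphi_norm {R : realType} {dm : measure_display} {T : measurableType dm}
  (P : probability T R) (lam0 : \bar R) (phi : R -> R) (X : T -> R) : \bar R :=
  ereal_inf [set tau%:E | tau in Bphi_set P lam0 phi X].

Definition YFtransform {R : realType} (lam0 : \bar R) (phi : R -> R) (x : R) : \bar R :=
  ereal_sup [set (l * x - phi l)%:E | l in YOdom lam0].

(* exp(-e) for an extended real e, with exp(-(+oo)) = 0.  (The case -oo never
   occurs for e = nu[phi](x) >= 0; it is mapped to 0 arbitrarily.) *)
Definition expNegE {R : realType} (e : \bar R) : R :=
  match e with
  | r%:E => expR (- r)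
  | _ => 0
  end.

From HB Require Import structures.
From mathcomp Require Import all_boot all_order all_algebra.
From mathcomp Require Import all_classical all_reals all_analysis.
From mathcomp Require Import measurable_realfun.
From mathcomp Require Import ring lra.
Set Implicit Arguments.
Unset Strict Implicit.
Unset Printing Implicit Defensive.

Import Order.TTheory GRing.Theory Num.Theory.
Import numFieldNormedType.Exports.
Local Open Scope classical_set_scope.
Local Open Scope ring_scope.

(* Bonferroni's inequality bounds P(max xi > u) below by the sum of the tails
   minus the sum of the joint tails P(xi_i > u, xi_j > u). A joint tail lies
   below P(xi_i + xi_j >= 2u), which Chernoff's bound controls through the
   moment generating function of xi_i + xi_j at l / (t_i + t_j); convexity of
   exp with weight t_i / (t_i + t_j) splits it into the moment generating
   functions of xi_i at l / t_i and of xi_j at l / t_j, each at most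
   exp(phi l) for admissible t_i, t_j. The resulting bound passes to the
   infimum t_i + t_j -> beta_i + beta_j, and optimising over l gives the
   Young-Fenchel transform. *)

Lemma expR_convex_comb (R : realType) (t a b : R) : 0 <= t <= 1 ->
  expR (t * a + (1 - t) * b) <= t * expR a + (1 - t) * expR b.
Proof. by case/andP=> t0 t1; have := convex_expR (Itv01 t0 t1) a b. Qed.

Section measurable_mfun.
Context (dm : measure_display) (T : measurableType dm) (R : realType).

Lemma measurable_EFin_expR (f : T -> R) : measurable_fun setT f ->
  measurable_fun setT (fun x => (expR (f x))%:E : \bar R).
Proof. by move=> mf; apply/measurable_EFinP; exact: measurableT_comp. Qed.

Lemma measurable_mfun_gt (X : {mfun T >-> R}) (u : R) : measurable [set x | u < X x].
Proof.
have := measurable_funPTI X (measurable_itv `]u, +oo[).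
by congr measurable; apply/funext => x; rewrite /preimage /= in_itv /= andbT.
Qed.

Lemma measurable_mfun_ge (X : {mfun T >-> R}) (u : R) : measurable [set x | u <= X x].
Proof.
have := measurable_funPTI X (measurable_itv `[u, +oo[).
by congr measurable; apply/funext => x; rewrite /preimage /= in_itv /= andbT.
Qed.

End measurable_mfun.

Section Bphi_norm.
Context (R : realType) (dm : measure_display) (T : measurableType dm).
Variables (P : probability T R) (lam0 : \bar R) (phi : R -> R).

Lemma Bphi_norm_le (X : T -> R) (b tau : R) : Bphi_norm P lam0 phi X = b%:E ->
  Bphi_set P lam0 phi X tau -> b <= tau.
Proof. by move=> Xb Xtau; rewrite -lee_fin -Xb; apply: ereal_inf_lbound; exists tau. Qed.

Lemma Bphi_norm_ge (X : T -> R) (b c : R) : Bphi_norm P lam0 phi X = b%:E ->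
  (forall tau, Bphi_set P lam0 phi X tau -> c <= tau) -> c <= b.
Proof.
move=> Xb cX; rewrite -lee_fin -Xb; apply: le_ereal_inf_tmp => _ [tau Xtau <-].
by rewrite lee_fin cX.
Qed.

Lemma mmt_gen_funD_le_Bphi (X Y : {RV P >-> R}) (tX tY l : R) :
  Bphi_set P lam0 phi X tX -> Bphi_set P lam0 phi Y tY -> 0 < tX -> 0 < tY ->
  YOdom lam0 l -> ('M_P (X \+ Y)%R (l / (tX + tY)) <= (expR (phi l))%:E)%E.
Proof.
move=> [_ Xtau] [_ Ytau] tX0 tY0 Ol.
have s0 : 0 < tX + tY by rewrite addr_gt0.
set th := tX / (tX + tY).
have th0 : 0 <= th by rewrite divr_ge0 ?ltW.
have th1 : th <= 1 by rewrite ler_pdivrMr // mul1r lerDl ltW.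
have mgfX := (Xtau (l / tX) _).1; have mgfY := (Ytau (l / tY) _).1.
rewrite !divfK ?gt_eqF // in mgfX mgfY.
have mexp (Z : {RV P >-> R}) c :
    measurable_fun setT (fun x => (expR (c * Z x))%:E : \bar R).
  by apply: measurable_EFin_expR; exact: measurable_funM.
rewrite /mmt_gen_fun unlock /=.
apply: (@le_trans _ _ (\int[P]_x ((th%:E * (expR (l / tX * X x))%:E) +
    ((1 - th)%:E * (expR (l / tY * Y x))%:E)))%E).
  apply: ge0_le_integral => //.
  - by apply: measurable_EFin_expR; apply: measurable_funM => //; exact: measurable_funD.
  - by apply: emeasurable_funD; apply: emeasurable_funM => //; exact: mexp.
  - move=> x _; rewrite -(EFinM th) -(EFinM (1 - th)) -EFinD lee_fin.
    have -> : (X x + Y x) * (l / (tX + tY)) =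
        th * (l / tX * X x) + (1 - th) * (l / tY * Y x).
      by rewrite /th; field; rewrite !gt_eqF.
    by apply: expR_convex_comb; rewrite th0 th1.
have th0E : (0 <= th%:E)%E by rewrite lee_fin.
have th1E : (0 <= (1 - th)%:E)%E by rewrite lee_fin subr_ge0.
rewrite ge0_integralD //; first last.
- by apply: emeasurable_funM => //; exact: mexp.
- by move=> x _; rewrite -EFinM lee_fin mulr_ge0 ?expR_ge0 ?subr_ge0.
- by apply: emeasurable_funM => //; exact: mexp.
- by move=> x _; rewrite -EFinM lee_fin mulr_ge0 ?expR_ge0.
rewrite !ge0_integralZl //; try exact: mexp.
apply: le_trans (leeD (lee_wpmul2l th0E (mgfX Ol)) (lee_wpmul2l th1E (mgfY Ol))) _.
by rewrite -EFinM -EFinD lee_fin -mulrDl subrKC mul1r.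
Qed.

Lemma joint_tail_le_Bphi_set (X Y : {RV P >-> R}) (tX tY l u : R) :
  Bphi_set P lam0 phi X tX -> Bphi_set P lam0 phi Y tY -> 0 < tX -> 0 < tY ->
  0 < l -> YOdom lam0 l ->
  (P ([set x | (u < X x)%R] `&` [set x | (u < Y x)%R]) <=
     (expR (- (l * (2 * u / (tX + tY)) - phi l)))%:E)%E.
Proof.
move=> Xt Yt tX0 tY0 l0 Ol.
have r0 : 0 < l / (tX + tY) by rewrite divr_gt0 // addr_gt0.
have sum_ge : [set x : T | u < X x] `&` [set x | u < Y x] `<=`
    [set x | 2 * u <= (X \+ Y) x].
  by move=> x [/= ux uy]; rewrite mulr2n mulrDl mul1r ltW // ltrD.
have mA : measurable ([set x | u < X x] `&` [set x | u < Y x]).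
  by apply: measurableI; exact: measurable_mfun_gt.
have mB := measurable_mfun_ge (X \+ Y) (2 * u).
apply: le_trans (le_measure P (mem_set mA) (mem_set mB) sum_ge) _.
apply: le_trans (chernoff (P := P) (X \+ Y) (2 * u) r0) _.
have e0 : (0 <= (expR (- (l / (tX + tY) * (2 * u))))%:E)%E by rewrite lee_fin expR_ge0.
apply: le_trans (lee_wpmul2r e0 (mmt_gen_funD_le_Bphi Xt Yt tX0 tY0 Ol)) _.
by rewrite -EFinM -expRD lee_fin ler_expR mulrCA mulrA; lra.
Qed.

Lemma joint_tail_le_Bphi_norm (X Y : {RV P >-> R}) (bX bY l u : R) :
  YoungOrlicz lam0 phi ->
  Bphi_norm P lam0 phi X = bX%:E -> Bphi_norm P lam0 phi Y = bY%:E ->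
  0 < bX -> 0 < bY -> 0 < u -> YOdom lam0 l ->
  (P ([set x | (u < X x)%R] `&` [set x | (u < Y x)%R]) <=
     (expR (- (l * (2 * u / (bX + bY)) - phi l)))%:E)%E.
Proof.
move=> [[_ phi_ge0 _ _ _] [_ phi_gt0 _ _ _]] Xb Yb bX0 bY0 u0 Ol.
set A := _ `&` _.
have mA : measurable A by apply: measurableI; exact: measurable_mfun_gt.
have PAE : P A = (fine (P A))%:E by rewrite fineK // fin_num_measure.
rewrite PAE lee_fin; set p := fine (P A).
have p_le1 : p <= 1 by rewrite -lee_fin -PAE probability_le1.
have c0 : 0 < 2 * u / (bX + bY) by rewrite divr_gt0 ?mulr_gt0 ?addr_gt0.
have [l_le0|l_gt0] := lerP l 0.
  apply: le_trans p_le1 _; rewrite -[leLHS]expR0 ler_expR.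
  by have := phi_ge0 l Ol; nra.
have [p_le0|p_gt0] := lerP p 0; first exact: le_trans p_le0 (expR_ge0 _).
set K := phi l - ln p.
have K0 : 0 < K.
  by have := ln_le0 p_le1; have := phi_gt0 l Ol l_gt0; rewrite /K; lra.
have tail_iff s : 0 < s ->
    (p <= expR (- (l * (2 * u / s) - phi l))) = (2 * u * l / K <= s).
  move=> s0; rewrite -{1}(lnK p_gt0) ler_expR opprB lerBrDl addrC -lerBrDl.
  by rewrite -/K mulrA [l * _]mulrC ler_pdivrMr // [K * s]mulrC -ler_pdivrMr.
(* The bound is decreasing in tX + tY, so it passes to the infima bX and bY. *)
rewrite tail_iff ?addr_gt0 // -lerBlDr.
apply: (Bphi_norm_ge Xb) => tX Xt; rewrite lerBlDr addrC -lerBlDr.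
apply: (Bphi_norm_ge Yb) => tY Yt; rewrite lerBlDr addrC.
have tX0 := lt_le_trans bX0 (Bphi_norm_le Xb Xt).
have tY0 := lt_le_trans bY0 (Bphi_norm_le Yb Yt).
rewrite -tail_iff ?addr_gt0 // -lee_fin -PAE.
exact: joint_tail_le_Bphi_set.
Qed.

End Bphi_norm.

Lemma expNegE_ge0 (R : realType) (e : \bar R) : 0 <= expNegE e.
Proof. by case: e => //= r; exact: expR_ge0. Qed.

Lemma expNegE_YFtransform_ge (R : realType) (lam0 : \bar R) (phi : R -> R) (x a : R) :
  (0 < lam0)%E -> (forall l, YOdom lam0 l -> a <= expR (- (l * x - phi l))) ->
  a <= expNegE (YFtransform lam0 phi x).
Proof.
move=> lam0_gt0 a_le.
have nu_ge : ((0 * x - phi 0)%:E <= YFtransform lam0 phi x)%E.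
  by apply: ereal_sup_ubound; exists 0 => //; rewrite /YOdom /= normr0.
have [a_le0|a_gt0] := lerP a 0.
  exact: le_trans a_le0 (expNegE_ge0 _).
have nu_le : (YFtransform lam0 phi x <= (- ln a)%:E)%E.
  apply: ge_ereal_sup => _ [l Ol <-].
  by rewrite lee_fin lerNr -ler_expR lnK ?posrE //; exact: a_le.
case: (YFtransform lam0 phi x) nu_ge nu_le => [r _ r_le| _ | ].
- by rewrite /= -[leLHS](lnK a_gt0) ler_expR lerNr -lee_fin.
- by rewrite leye_eq.
- by rewrite leeNy_eq.
Qed.

Lemma sum_indic_le_bigcup_pairs (R : realType) (T : Type) (I : finType)
  (A : I -> set T) (x : T) :
  \sum_i \1_(A i) x <=
  \1_(\bigcup_i A i) x + \sum_i \sum_(j | j != i) (\1_(A i `&` A j) x : R).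
Proof.
have pairs_ge0 : 0 <= \sum_i \sum_(j | j != i) (\1_(A i `&` A j) x : R).
  by do 2!apply: sumr_ge0 => ? _.
have [[i0 Ai0x]|noA] := pselect (exists i, A i x); last first.
  rewrite big1 ?addr_ge0 // => i _; rewrite indicE memNset //= => Aix.
  by apply: noA; exists i.
rewrite (bigD1 i0) //= [X in _ <= _ + X](bigD1 i0) //= indicE mem_set //.
rewrite indicE mem_set; last by exists i0.
apply: lerD => //; rewrite -[leLHS]addr0.
apply: lerD; last by apply: sumr_ge0 => i _; apply: sumr_ge0.
by apply: ler_sum => j _; rewrite !indicE in_setI (mem_set Ai0x).
Qed.

Section bonferroni.
Context (d : measure_display) (T : measurableType d) (R : realType).
Variable mu : {measure set T -> \bar R}.

Let measurable_sum_indic (J : finType) (p : pred J) (B : J -> set T) :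
  (forall j, measurable (B j)) ->
  measurable_fun setT (fun x => (\sum_(j | p j) \1_(B j) x)%:E : \bar R).
Proof.
move=> mB; apply/measurable_EFinP; under eq_fun do rewrite -big_filter.
by apply: measurable_sum => j; exact: measurable_indic.
Qed.

Let sum_measure_integral (J : finType) (p : pred J) (B : J -> set T) :
  (forall j, measurable (B j)) ->
  (\sum_(j | p j) mu (B j) = \int[mu]_x (\sum_(j | p j) \1_(B j) x)%:E)%E.
Proof.
move=> mB; under eq_integral do rewrite -sumEFin -big_filter.
rewrite ge0_integral_sum //; last by move=> j; apply/measurable_EFinP; exact: measurable_indic.
by rewrite big_filter; apply: eq_bigr => j _; rewrite integral_indic // setIT.
Qed.

Lemma measure_bigcup_ge_pairwise (I : finType) (A : I -> set T) :
  (forall i, measurable (A i)) ->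
  (\sum_i mu (A i) <= mu (\bigcup_i A i) + \sum_i \sum_(j | j != i) mu (A i `&` A j))%E.
Proof.
move=> mA.
have mU : measurable (\bigcup_i A i) by apply: fin_bigcup_measurable => //; exact: finite_finset.
rewrite pair_big_dep /= !sum_measure_integral //; last by move=> ij; exact: measurableI.
rewrite -(setIT (\bigcup_i A i)) -integral_indic // -ge0_integralD //; first last.
- by apply: measurable_sum_indic => ij; exact: measurableI.
- by move=> x _; rewrite lee_fin sumr_ge0.
- by apply/measurable_EFinP; exact: measurable_indic.
apply: ge0_le_integral => //.
- by move=> x _; rewrite lee_fin sumr_ge0.
- exact: measurable_sum_indic.
- apply: emeasurable_funD; first by apply/measurable_EFinP; exact: measurable_indic.
  by apply: measurable_sum_indic => ij; exact: measurableI.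
move=> x _; rewrite -EFinD lee_fin.
by have := sum_indic_le_bigcup_pairs R A x; rewrite pair_big_dep.
Qed.

End bonferroni.

Lemma bigmax_EFin_gt_bigcup (T : Type) (R : realType) (I : finType)
  (f : I -> T -> R) (u : R) :
  [set x | (u%:E < \big[Order.max/-oo]_i (f i x)%:E)%E] = \bigcup_i [set x | u < f i x].
Proof.
apply/seteqP; split => x /=.
- by case/bigmax_gtP => [|[i _ uf]]; [rewrite ltNge leNye | exists i; rewrite -?lte_fin].
- by case=> i _ uf; apply/bigmax_gtP; right; exists i; rewrite ?lte_fin.
Qed.

Theorem proposition4p1 (R : realType) (dm : measure_display) (T : measurableType dm)
  (P : probability T R) (d : nat) (xi : 'I_d -> {RV P >-> R})
  (lam0 : \bar R) (phi : R -> R) (beta delta : 'I_d -> R) :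
  (2 <= d)%N ->
  (forall i, P.-integrable setT (EFin \o xi i) /\ ('E_P[xi i] = 0)%E) ->
  YoungOrlicz lam0 phi ->
  (forall i, Bphi_norm P lam0 phi (xi i) = (beta i)%:E /\ 0 < beta i) ->
  (forall i, 0 < delta i <= beta i) ->
  (forall i (u : R), 1 <= u ->
     (P [set x | (u < xi i x)%R] >= (expNegE (YFtransform lam0 phi (u / delta i)))%:E)%E) ->
  forall u : R, 1 <= u ->
    (P [set x | (u%:E < \big[Order.max/-oo]_(i < d) (xi i x)%:E)%E] >=
      (\sum_(i < d) expNegE (YFtransform lam0 phi (u / delta i))
       - \sum_(i < d) \sum_(j < d | j != i)
           expNegE (YFtransform lam0 phi (2 * u / (beta i + beta j))))%:E)%E.
Proof.
move=> _ _ YO xi_norm _ xi_tail u u_ge1.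
have u_gt0 : 0 < u := lt_le_trans ltr01 u_ge1.
have lam0_gt0 : (0 < lam0)%E by case: YO => [[]].
pose A i := [set x | u < xi i x].
have mA i : measurable (A i) := measurable_mfun_gt (xi i) u.
rewrite bigmax_EFin_gt_bigcup.
have tails : ((\sum_i expNegE (YFtransform lam0 phi (u / delta i)))%:E <= \sum_i P (A i))%E.
  by rewrite -sumEFin; apply: lee_sum => i _; exact: xi_tail.
have pairs : (\sum_i \sum_(j | j != i) P (A i `&` A j) <=
    (\sum_i \sum_(j | j != i) expNegE (YFtransform lam0 phi (2 * u / (beta i + beta j))))%:E)%E.
  rewrite -sumEFin; apply: lee_sum => i _; rewrite -sumEFin; apply: lee_sum => j _.
  have mAij := measurableI _ _ (mA i) (mA j).
  rewrite -(fineK (fin_num_measure P _ mAij)) lee_fin.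
  apply: expNegE_YFtransform_ge => // l Ol.
  rewrite -lee_fin fineK ?fin_num_measure //.
  have [[Xb bX_gt0] [Yb bY_gt0]] := (xi_norm i, xi_norm j).
  exact: joint_tail_le_Bphi_norm YO Xb Yb bX_gt0 bY_gt0 u_gt0 Ol.
have := le_trans tails (le_trans (measure_bigcup_ge_pairwise P mA) (leeD2l _ pairs)).
by rewrite EFinB leeBlDr.
Qed.
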